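(* The Vietoris functor $\mathbb{V}\colon \mathbf{CH}\to\mathbf{CH}$ preserves coreflexive equalizers: if $f,g\colon X\to Y$ are morphisms in $\mathbf{CH}$ having a common retraction $k\colon Y\to X$ (i.e. $k\circ f=k\circ g=1_X$) and $h\colon E\to X$ is an equalizer of $f$ and $g$ in $\mathbf{CH}$, then $\mathbb{V}h$ is an equalizer of $\mathbb{V}f$ and $\mathbb{V}g$ in $\mathbf{CH}$.
   Context: $\mathbf{CH}$ denotes the category of compact Hausdorff spaces and continuous maps. For a compact Hausdorff space $X$, $\mathbb{V}X$ is the set of all closed subsets of $X$ (including $\varnothing$) with the Vietoris topology, generated by the sets $\Box U=\{K\in\mathbb{V}X\mid K\subseteq U\}$ and $\Diamond U=\{K\in\mathbb{V}X\mid K\cap U\neq\varnothing\}$ for $U$ open in $X$; it is a compact Hausdorff space. For a continuous $f\colon X\to Y$, $\mathbb{V}f\colon\mathbb{V}X\to\mathbb{V}Y$ is $K\mapsto f[K]$. *)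

From HB Require Import structures.
From mathcomp Require Import all_boot all_order all_algebra.
From mathcomp Require Import all_classical all_reals all_analysis.
Set Implicit Arguments. Unset Strict Implicit. Unset Printing Implicit Defensive.
Import Order.TTheory GRing.Theory Num.Theory.
Local Open Scope classical_set_scope.

Definition CH (T : topologicalType) : Prop :=
  compact [set: T] /\ hausdorff_space T.

(* Carrier of the Vietoris space: closed subsets of X (including the empty set). *)
Record vietoris (X : topologicalType) := Vietoris {
  vset : set X;
  vclosed : closed vset }.

HB.instance Definition _ (X : topologicalType) := gen_eqMixin (vietoris X).
HB.instance Definition _ (X : topologicalType) := gen_choiceMixin (vietoris X).

Definition vbox (X : topologicalType) (U : set X) : set (vietoris X) :=
  [set K | vset K `<=` U].
Definition vdiamond (X : topologicalType) (U : set X) : set (vietoris X) :=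
  [set K | vset K `&` U !=set0].

Definition vietoris_subbase (X : topologicalType) (p : bool * set X)
  : set (vietoris X) :=
  if p.1 then vbox p.2 else vdiamond p.2.

HB.instance Definition _ (X : topologicalType) :=
  isSubBaseTopological.Build (vietoris X)
    [set p : bool * set X | open p.2] (@vietoris_subbase X).

Lemma vmap_closed (X Y : topologicalType) (f : X -> Y)
  (cX : compact [set: X]) (hY : hausdorff_space Y) (cf : continuous f)
  (K : vietoris X) : closed (f @` vset K).
Proof.
have cK : compact (vset K).
  exact: (@subclosed_compact X (vset K) [set: X] (@vclosed X K) cX).
have cfK : compact (f @` vset K).
  apply: continuous_compact => //; exact: continuous_subspaceT.
exact: (@compact_closed Y _ hY cfK).
Qed.

Definition vmap (X Y : topologicalType) (f : X -> Y)
  (cX : compact [set: X]) (hY : hausdorff_space Y) (cf : continuous f)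
  (K : vietoris X) : vietoris Y :=
  @Vietoris Y (f @` vset K) (@vmap_closed X Y f cX hY cf K).

(* h : E -> X is an equalizer of f, g : X -> Y in the category CH
   (E, X, Y are assumed to be objects of CH separately). *)
Definition is_equalizer_CH (E X Y : topologicalType)
  (h : E -> X) (f g : X -> Y) : Prop :=
  [/\ continuous h, f \o h = g \o h &
    forall (Z : topologicalType), CH Z ->
      forall u : Z -> X, continuous u -> f \o u = g \o u ->
        exists! v : Z -> E, continuous v /\ h \o v = u].

From HB Require Import structures.
From mathcomp Require Import all_boot all_order all_algebra.
From mathcomp Require Import all_classical all_reals all_analysis.
Local Open Scope classical_set_scope.

(* Testing the universal property against constant maps from
   the two-point space shows that h is injective with image the equalizer set
   {x | f x = g x}; being a continuous map from a compact space to a Hausdorff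
   space, h is moreover closed.  If u : Z -> V X satisfies Vf o u = Vg o u,
   then f[u z] = g[u z], and the common retraction k forces every point of
   u z into the equalizer set, i.e. u z lies in the image of h.  The
   factorization is then z |-> h^-1[u z]: a subbasic set Box V (resp.
   Diamond V) pulls back along K |-> h^-1[K] to Box W (resp. Diamond W) on
   sets contained in the image of h, where W = X \ h[E \ V] is open, so the
   factorization is continuous.  Uniqueness holds because Vh is injective. *)

Lemma vset_inj (X : topologicalType) : injective (@vset X).
Proof.
case=> [A cA] [B cB] /= eAB; subst B.
by rewrite (Prop_irrelevance cA cB).
Qed.

Lemma vietoris_subbase_open (X : topologicalType) (b : bool) (U : set X) :
  open U -> open (vietoris_subbase (b, U)).
Proof.
move=> oU; exists [set vietoris_subbase (b, U)]; last by rewrite bigcup_set1.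
by move=> _ ->; apply: finI_from1.
Qed.

Lemma vbox_open (X : topologicalType) (U : set X) :
  open U -> open (vbox U : set (vietoris X)).
Proof. exact: (@vietoris_subbase_open X true). Qed.

Lemma vdiamond_open (X : topologicalType) (U : set X) :
  open U -> open (vdiamond U : set (vietoris X)).
Proof. exact: (@vietoris_subbase_open X false). Qed.

Lemma vietoris_continuous (Z X : topologicalType) (F : Z -> vietoris X) :
  (forall U, open U -> open (F @^-1` vbox U)) ->
  (forall U, open U -> open (F @^-1` vdiamond U)) -> continuous F.
Proof.
move=> Fbox Fdiamond; apply/continuousP => _ [D sD <-].
rewrite preimage_bigcup; apply: bigcup_open => C /sD.
rewrite /= filterI_iter_finI => -[n _]; elim: n C => [|n IHn] C /=.
  move=> [->|[[[] U] /= oU <-]]; first by rewrite preimage_setT; exact: openT.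
  - exact: Fbox.
  - exact: Fdiamond.
by move=> [A /IHn oA [B /IHn oB <-]]; rewrite preimage_setI; exact: openI.
Qed.

(* V f is continuous: it pulls Box U and Diamond U back to Box f^-1[U] and
   Diamond f^-1[U]. *)
Lemma vmap_continuous (X Y : topologicalType) (f : X -> Y)
    (cX : compact [set: X]) (hY : hausdorff_space Y) (cf : continuous f) :
  continuous (vmap cX hY cf).
Proof.
have fopen U : open U -> open (f @^-1` U) by apply: (proj1 (continuousP f)).
apply: vietoris_continuous => U oU.
- have -> : vmap cX hY cf @^-1` vbox U = vbox (f @^-1` U).
    apply/seteqP; split => K /= KU.
      by move=> x Kx; apply: KU; exists x.
    by move=> _ [x Kx <-]; exact: KU.
  exact/vbox_open/fopen.
- have -> : vmap cX hY cf @^-1` vdiamond U = vdiamond (f @^-1` U).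
    apply/seteqP; split => K /=.
      by move=> [_ [[x Kx <-] Ufx]]; exists x.
    by move=> [x [Kx Ufx]]; exists (f x); split => //; exists x.
  exact/vdiamond_open/fopen.
Qed.

Lemma vmap_injective {X Y : topologicalType} {f : X -> Y}
    (cX : compact [set: X]) (hY : hausdorff_space Y) (cf : continuous f) :
  injective f -> injective (vmap cX hY cf).
Proof.
move=> finj K L /(congr1 (@vset Y)) /= fKL; apply: vset_inj.
have sub (A B : set X) : f @` A = f @` B -> A `<=` B.
  by move=> fAB x Ax; have [y By /finj <-] : (f @` B) (f x) by rewrite -fAB; exists x.
by apply/seteqP; split; apply: sub.
Qed.

(* A continuous map from a compact space to a Hausdorff space is closed;
   hence X \ h[E \ V] is open whenever V is. *)
Lemma open_compl_image_compl {E X : topologicalType} {h : E -> X}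
    (cE : compact [set: E]) (hX : hausdorff_space X) (ch : continuous h)
    (V : set E) : open V -> open (~` (h @` ~` V)).
Proof.
move=> oV; apply: closed_openC.
exact: (@vmap_closed E X h cE hX ch (Vietoris (open_closedC oV))).
Qed.

(* The two-point space is an object of CH; constant maps from it are used to
   probe the universal property of an equalizer pointwise. *)
Lemma CH_bool : CH bool.
Proof.
split; first by apply: finite_compact; exact: finite_finset.
exact: discrete_hausdorff.
Qed.

Section EqualizerInCH.
Variables (E X Y : topologicalType) (h : E -> X) (f g : X -> Y).
Hypothesis heq : is_equalizer_CH h f g.

(* An equalizer in CH is injective: two points with the same image give two
   factorizations of the same constant map. *)
Lemma equalizer_injective : injective h.
Proof.
move=> e1 e2 he; case: heq => _ fgh univ.
have [v [_ vuniq]] := univ bool CH_bool (fun=> h e1) (@cst_continuous bool X (h e1))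
  (funext (fun=> congr1 (fun F => F e1) fgh)).
have v1 := vuniq (fun=> e1) (conj (@cst_continuous bool E e1) erefl).
have v2 := vuniq (fun=> e2) (conj (@cst_continuous bool E e2) (funext (fun=> esym he))).
exact: (congr1 (fun F => F true) (etrans (esym v1) v2)).
Qed.

Lemma equalizer_onto (x : X) : f x = g x -> exists e, h e = x.
Proof.
move=> fgx; case: heq => _ _ univ.
have [v [[_ hv] _]] := univ bool CH_bool (fun=> x) (@cst_continuous bool X x)
  (funext (fun=> fgx)).
by exists (v true); exact: (congr1 (fun F => F true) hv).
Qed.

End EqualizerInCH.

Arguments equalizer_injective {E X Y h f g}.
Arguments equalizer_onto {E X Y h f g}.

(* For a coreflexive pair f, g with common retraction k, a set with
   f[A] = g[A] lies inside the equalizer set: if f x = g x' then applying k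
   gives x = x', so f x = g x. *)
Lemma coreflexive_image_eq {X Y : topologicalType} {f g : X -> Y}
    {k : Y -> X} {A : set X} :
  k \o f = id -> k \o g = id -> f @` A = g @` A ->
  A `<=` [set x | f x = g x].
Proof.
move=> kf kg fgA x Ax.
have : (f @` A) (f x) by exists x.
rewrite fgA => -[x' _ gx'].
have xx' : x' = x.
  have /= kfx := congr1 (fun F => F x) kf; have /= kgx' := congr1 (fun F => F x') kg.
  by rewrite -kfx -kgx' gx'.
by rewrite /= -gx' xx'.
Qed.

Lemma preimage_vbox {E X : topologicalType} (h : E -> X) (K : set X) (V : set E) :
  (h @^-1` K `<=` V) <-> (K `<=` ~` (h @` ~` V)).
Proof.
split => [KV x Kx [e nVe he] | KW e Khe].
  by apply/nVe/KV; rewrite /= he.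
by apply: contrapT => nVe; apply: (KW (h e) Khe); exists e.
Qed.

Lemma preimage_vdiamond {E X : topologicalType} (h : E -> X) (K : set X)
    (V : set E) : injective h -> K `<=` range h ->
  (h @^-1` K `&` V !=set0) <-> (K `&` ~` (h @` ~` V) !=set0).
Proof.
move=> hinj Kh; split => [[e [Khe Ve]] | [x [Kx Wx]]].
  by exists (h e); split => // -[e' nVe' /hinj ee']; apply: nVe'; rewrite ee'.
have [e _ hex] := Kh x Kx; exists e; split; first by rewrite /= hex.
by apply: contrapT => nVe; apply: Wx; exists e.
Qed.

Definition vpreimage {E X : topologicalType} {h : E -> X} (ch : continuous h)
    (K : vietoris X) : vietoris E :=
  Vietoris (proj1 (continuous_closedP h) ch _ (@vclosed X K)).

Lemma vmap_vpreimage {E X : topologicalType} {h : E -> X}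
    (cE : compact [set: E]) (hX : hausdorff_space X) (ch : continuous h)
    (K : vietoris X) :
  vset K `<=` range h -> vmap cE hX ch (vpreimage ch K) = K.
Proof.
move=> Kh; apply: vset_inj; apply/seteqP; split => [_ [e ? <-] //|x Kx].
by have [e _ hex] := Kh x Kx; exists e; rewrite /= ?hex.
Qed.

Lemma vpreimage_continuous {Z E X : topologicalType} {h : E -> X}
    (cE : compact [set: E]) (hX : hausdorff_space X) (ch : continuous h)
    (u : Z -> vietoris X) :
  injective h -> continuous u -> (forall z, vset (u z) `<=` range h) ->
  continuous (vpreimage ch \o u).
Proof.
move=> hinj cu uh; have uopen := proj1 (continuousP u) cu.
have Wopen := open_compl_image_compl cE hX ch.
apply: vietoris_continuous => V oV.
- have -> : (vpreimage ch \o u) @^-1` vbox V = u @^-1` vbox (~` (h @` ~` V)).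
    by apply/seteqP; split => z; have [] := preimage_vbox h (vset (u z)) V.
  exact/uopen/vbox_open/Wopen.
- have -> : (vpreimage ch \o u) @^-1` vdiamond V = u @^-1` vdiamond (~` (h @` ~` V)).
    apply/seteqP; split => z;
      by have [] := preimage_vdiamond h (vset (u z)) V hinj (uh z).
  exact/uopen/vdiamond_open/Wopen.
Qed.

Theorem proposition2p6 (E X Y : topologicalType)
  (cE : compact [set: E]) (hE : hausdorff_space E)
  (cX : compact [set: X]) (hX : hausdorff_space X)
  (cY : compact [set: Y]) (hY : hausdorff_space Y)
  (f g : X -> Y) (k : Y -> X) (h : E -> X)
  (cf : continuous f) (cg : continuous g) (ck : continuous k)
  (ch : continuous h) :
  k \o f = id -> k \o g = id ->
  is_equalizer_CH h f g ->
  is_equalizer_CH (vmap cE hX ch) (vmap cX hY cf) (vmap cX hY cg).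
Proof.
move=> kf kg heq; have [_ fgh _] := heq.
have hinj := equalizer_injective heq.
split; first exact: vmap_continuous.
  by apply: funext => K; apply: vset_inj; rewrite /= !image_comp fgh.
move=> Z _ u cu fgu.
have u_in_range z : vset (u z) `<=` range h.
  have fgz : f @` vset (u z) = g @` vset (u z).
    by have /= := congr1 (@vset Y) (congr1 (fun F => F z) fgu).
  move=> x ux; have [e hex] := equalizer_onto heq x (coreflexive_image_eq kf kg fgz x ux).
  by exists e.
have hvu : vmap cE hX ch \o (vpreimage ch \o u) = u.
  by apply: funext => z; exact: vmap_vpreimage.
exists (vpreimage ch \o u); split.
  by split => //; exact: vpreimage_continuous.
move=> v' [_ hv']; apply: funext => z; apply: (vmap_injective cE hX ch hinj).
exact: (congr1 (fun F => F z) (etrans hvu (esym hv'))).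
Qed.
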